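(* There do not exist constants $\ell,m\in\mathbb{N}$ with the following property: every trinomial $f\in\mathbb{R}[x_1]$ that is positive on all of $\mathbb{R}$ can be written as $f=g_1^2+\cdots+g_\ell^2$ for some $g_1,\dots,g_\ell\in\mathbb{R}[x_1]$, each having at most $m$ monomial terms.
   Context: A trinomial is a univariate polynomial with exactly three nonzero monomial terms. *)

From HB Require Import structures.
From Stdlib Require Import Reals ClassicalEpsilon FunctionalExtensionality.
From mathcomp Require Import all_boot all_order all_algebra.
Set Implicit Arguments. Unset Strict Implicit. Unset Printing Implicit Defensive.
Import GRing.Theory.

HB.instance Definition _ := hasDecEq.Build R (@compareP R Req_EM_T).

Definition R_find (P : pred R) (n : nat) : option R :=
  match excluded_middle_informative (exists x, P x) with
  | left H => Some (proj1_sig (constructive_indefinite_description _ H))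
  | right _ => None
  end.

Lemma R_find_correct (P : pred R) n x : R_find P n = Some x -> P x.
Proof.
rewrite /R_find; case: excluded_middle_informative => // H [<-].
exact: (proj2_sig (constructive_indefinite_description _ H)).
Qed.

Lemma R_find_complete (P : pred R) : (exists x, P x) -> exists n, R_find P n.
Proof. by move=> H; exists 0%N; rewrite /R_find; case: excluded_middle_informative. Qed.

Lemma R_find_ext (P Q : pred R) : P =1 Q -> R_find P =1 R_find Q.
Proof. by move=> /functional_extensionality ->. Qed.

HB.instance Definition _ := hasChoice.Build R R_find_correct R_find_complete R_find_ext.

HB.instance Definition _ := GRing.isZmodule.Build R
  (fun x y z => esym (Rplus_assoc x y z)) Rplus_comm Rplus_0_l Rplus_opp_l.

Lemma R1_neq0 : R1 != R0.
Proof. by apply/eqP; exact: R1_neq_R0. Qed.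

HB.instance Definition _ := GRing.Zmodule_isComNzRing.Build R
  (fun x y z => esym (Rmult_assoc x y z)) Rmult_comm Rmult_1_l Rmult_plus_distr_r R1_neq0.

Definition nterms {T : nzRingType} (p : {poly T}) : nat :=
  count (fun c => c != 0%R) (polyseq p).

Definition trinomial {T : nzRingType} (p : {poly T}) : Prop := nterms p = 3%N.

(** The trinomial [f_N = 1 + x + x^(2N)] is positive on [R].  Suppose
    [f_N = g_1^2 + ... + g_l^2].  The coefficient of [x] forces some [g_i] to have
    an [x]-term.  If some [g_i] has a term [x^a] with [0 < a < N], then [f_N] has no
    [x^(2a)]-term, so the positive contribution [sum_i (g_i)_a^2] must be cancelled
    by a product involving a term of some [g_j] of degree in [(a, 2a]].  Doubling
    from [1] thus yields more than [K] exponents in [[1, 2^K]] carried by the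
    [g_i]; for [N = 2^(l m) + 1] this exceeds the [l m] terms available. *)

From HB Require Import structures.
From Stdlib Require Import Reals Lra.
From mathcomp Require Import all_boot all_order all_algebra.
Set Implicit Arguments.
Unset Strict Implicit.
Unset Printing Implicit Defensive.
Import GRing.Theory.
Local Open Scope ring_scope.

Definition coef_support {T : nzRingType} (p : {poly T}) : seq nat :=
  [seq t <- iota 0 (size p) | p`_t != 0].

Section Support.
Variable T : nzRingType.
Implicit Types p : {poly T}.

Lemma nterms_size_support p : nterms p = size (coef_support p).
Proof. by rewrite size_filter /nterms -{1}(mkseq_nth 0 p) /mkseq count_map. Qed.

Lemma mem_coef_support p t : (t \in coef_support p) = (p`_t != 0).
Proof.
rewrite mem_filter mem_iota add0n /=; case: ltnP => [|/(nth_default 0) ->];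
  by rewrite ?andbT ?eqxx.
Qed.

Lemma uniq_coef_support p : uniq (coef_support p).
Proof. exact/filter_uniq/iota_uniq. Qed.

Lemma nterms_eq (s : seq nat) p :
  uniq s -> (forall t, (p`_t != 0) = (t \in s)) -> nterms p = size s.
Proof.
move=> s_uniq supp_s; rewrite nterms_size_support; apply: perm_size.
by apply: uniq_perm (uniq_coef_support p) s_uniq _ => t; rewrite mem_coef_support.
Qed.

Lemma count_coef_neq0_le_nterms (s : seq nat) p :
  uniq s -> (count (fun t => p`_t != 0)%R s <= nterms p)%N.
Proof.
move=> s_uniq; rewrite -size_filter nterms_size_support.
apply: uniq_leq_size; first exact: filter_uniq.
by move=> t; rewrite mem_filter mem_coef_support => /andP[].
Qed.

Lemma coef1_sqr p : p`_1 = 0 -> (p ^+ 2)`_1 = 0.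
Proof. by move=> p1; rewrite expr2 coefM big_ord_recr big_ord1 /= p1 mulr0 mul0r addr0. Qed.

(* Every other product [p_j * p_(2a-j)] has an index in [(a, 2a]]. *)
Lemma coef_sqr_double p a :
  (forall c, (a < c <= 2 * a)%N -> p`_c = 0) -> (p ^+ 2)`_(2 * a) = p`_a * p`_a.
Proof.
move=> gap; rewrite expr2 coefM.
have a_lt : (a < (2 * a).+1)%N by rewrite ltnS mul2n -addnn leq_addl.
rewrite (bigD1 (Ordinal a_lt)) //= big1 ?addr0; first by rewrite mul2n -addnn addnK.
move=> [j j_le] j_neq_a /=.
have {j_neq_a} : j != a by apply: contraNneq j_neq_a => j_eq; apply/eqP/val_inj.
rewrite ltnS in j_le; case: ltngtP => // [j_lt_a|a_lt_j] _.
- rewrite (gap (2 * a - j)%N) ?mulr0 //.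
  by rewrite leq_subr andbT ltn_subRL mul2n -addnn ltn_add2r.
- by rewrite (gap j) ?mul0r // a_lt_j.
Qed.

End Support.

Lemma count_exists_le_sum (I : finType) (P : I -> pred nat) (s : seq nat) :
  (count (fun t => [exists i, P i t]) s <= \sum_i count (P i) s)%N.
Proof.
elim: s => [|t s IHs] /=; first by rewrite big1.
rewrite big_split /= leq_add //; case: existsP => //= [[i Pit]].
by rewrite (bigD1 i) //= Pit.
Qed.

Lemma count_iota1_lt (P : pred nat) a c :
  (a < c)%N -> P c -> (count P (iota 1 a) < count P (iota 1 c))%N.
Proof.
move=> a_lt_c Pc.
rewrite -[X in (_ < count _ (iota 1 X))%N](subnKC (ltnW a_lt_c)) iotaD count_cat.
rewrite -[X in (X < _)%N]addn0 ltn_add2l -has_count; apply/hasP; exists c => //.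
by rewrite mem_iota add1n a_lt_c addSn (subnKC (ltnW a_lt_c)) ltnSn.
Qed.

Lemma doubling_count (P : pred nat) n :
  P 1%N ->
  (forall a, (0 < a < n)%N -> P a -> exists2 c, (a < c <= 2 * a)%N & P c) ->
  forall j, (2 ^ j < n)%N -> (j < count P (iota 1 (2 ^ j)))%N.
Proof.
move=> P1 doubling j j_lt_n.
suff [a /and3P[a_gt0 a_le Pa] j_lt] :
    exists2 a, [&& 0 < a, a <= 2 ^ j & P a]%N & (j < count P (iota 1 a))%N.
  rewrite (leq_trans j_lt) // -(subnKC a_le) iotaD count_cat; exact: leq_addr.
elim: j j_lt_n => [|j IHj] j1_lt_n; first by exists 1%N; rewrite //= P1.
have [|a /and3P[a_gt0 a_le Pa] j_lt] := IHj.
  by rewrite (leq_ltn_trans _ j1_lt_n) // leq_pexp2l.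
have a_lt_n : (a < n)%N.
  by rewrite (leq_ltn_trans a_le) // (leq_ltn_trans _ j1_lt_n) ?leq_pexp2l.
have [c /andP[a_lt_c c_le] Pc] := doubling a (introT andP (conj a_gt0 a_lt_n)) Pa.
exists c; last exact: leq_ltn_trans j_lt (count_iota1_lt a_lt_c Pc).
by rewrite (ltn_trans a_gt0 a_lt_c) Pc (leq_trans c_le) // expnS leq_mul2l a_le orbT.
Qed.

Lemma exprR_pow (x : R) n : x ^+ n = pow x n.
Proof. by elim: n => [|n IHn] //; rewrite exprS IHn. Qed.

Lemma sum_sqr_gt0 l (c : 'I_l -> R) i0 :
  c i0 != 0 -> Rlt 0 (\sum_i c i * c i).
Proof.
move=> /eqP ci0_neq0; rewrite (bigD1 i0) //=.
apply: Rplus_lt_le_0_compat; first exact: Rsqr_pos_lt.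
elim/big_ind: _ => [|x y|i _];
  [exact: Rle_refl | exact: Rplus_le_le_0_compat | exact: Rle_0_sqr].
Qed.

Lemma sum_sqr_coef1 (T : nzRingType) l (g : 'I_l -> {poly T}) :
  (\sum_i g i ^+ 2)`_1 != 0 -> [exists i, (g i)`_1 != 0].
Proof.
apply: contraNT => /existsPn g1_eq0; rewrite coef_sum big1 // => i _.
by apply: coef1_sqr; apply/eqP; rewrite -[_ == 0]negbK g1_eq0.
Qed.

(* Otherwise the coefficient at [x^(2a)] would be [sum_i (g_i)_a^2 > 0]. *)
Lemma sum_sqr_coef_gap l (g : 'I_l -> {poly R}) a :
  [exists i, (g i)`_a != 0] -> (\sum_i g i ^+ 2)`_(2 * a) = 0 ->
  exists2 c, (a < c <= 2 * a)%N & [exists i, (g i)`_c != 0].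
Proof.
move=> /existsP[i0 gi0a_neq0] sos2a_eq0.
pose has_term c := [exists i, (g i)`_c != 0].
have [/hasP[c] | /hasPn gap] := boolP (has has_term (iota a.+1 a)).
  by rewrite mem_iota addSn addnn -mul2n ltnS => c_range; exists c.
have gap_i i c : (a < c <= 2 * a)%N -> (g i)`_c = 0.
  move=> /andP[a_lt_c c_le]; have /gap /existsPn/(_ i) : c \in iota a.+1 a.
    by rewrite mem_iota a_lt_c addSn addnn -mul2n ltnS.
  by move/negbNE/eqP.
have := @sum_sqr_gt0 _ (fun i => (g i)`_a) _ gi0a_neq0.
rewrite -(eq_bigr _ (fun i _ => coef_sqr_double (gap_i i))) -coef_sum sos2a_eq0.
by move/Rlt_irrefl.
Qed.

Definition hard_trinomial (N : nat) : {poly R} := 1 + 'X + 'X^(2 * N).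

Lemma coef_hard_trinomial N k : (0 < N)%N ->
  ((hard_trinomial N)`_k != 0) = (k \in [:: 0; 1; 2 * N]%N).
Proof.
move=> N_gt0; rewrite !inE !coefD coef1 coefX coefXn.
case: N N_gt0 => // N _; rewrite mulnS !addSn add0n.
case: k => [|[|k]] /=; rewrite ?addr0 ?add0r ?oner_neq0 //.
by case: (k.+2 == _); rewrite ?oner_neq0 ?eqxx.
Qed.

Lemma hard_trinomial_trinomial N : (0 < N)%N -> trinomial (hard_trinomial N).
Proof.
move=> N_gt0; rewrite /trinomial (@nterms_eq _ [:: 0; 1; 2 * N]%N) // => [|k].
  by case: N N_gt0 => // N _; rewrite mulnS !addSn.
exact: coef_hard_trinomial.
Qed.

Lemma hard_trinomial_gt0 N : (0 < N)%N -> forall x : R, Rlt 0 (hard_trinomial N).[x].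
Proof.
move=> N_gt0 x; rewrite /hard_trinomial !hornerE exprR_pow.
change (Rlt 0 (1 + x + pow x (2 * N)%coq_nat)); rewrite pow_mult.
have x2_ge0 : Rle 0 (pow x 2) by nra.
have [x_le | x_gt] := Rle_lt_dec x (-1).
- have : Rle (pow x 2) (pow (pow x 2) N).
    by rewrite -{1}[pow x 2]pow_1; apply: Rle_pow; [nra | apply/leP].
  nra.
- have := pow_le _ N x2_ge0; lra.
Qed.

Local Close Scope ring_scope.

Theorem theorem1p2 :
  ~ (exists l m : nat,
       forall f : {poly R},
         trinomial f ->
         (forall x : R, Rlt 0 f.[x]%R) ->
         exists g : 'I_l -> {poly R},
           (forall i, (nterms (g i) <= m)%N) /\
           f = (\sum_(i < l) g i ^+ 2)%R).
Proof.
move=> [l [m sos]]; pose N := (2 ^ (l * m)).+1; have N_gt0 : 0 < N by [].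
have [g [g_terms f_sos]] :=
  sos _ (hard_trinomial_trinomial N_gt0) (hard_trinomial_gt0 N_gt0).
pose P t := [exists i, ((g i)`_t != 0)%R].
have P1 : P 1 by apply: sum_sqr_coef1; rewrite -f_sos coef_hard_trinomial.
have doubling a : 0 < a < N -> P a -> exists2 c, a < c <= 2 * a & P c.
  move=> /andP[a_gt0 a_lt_N] Pa; apply: sum_sqr_coef_gap Pa _; rewrite -f_sos.
  have two_a_neq1 : (2 * a == 1) = false.
    by apply/negbTE/eqP => /(congr1 odd); rewrite oddM.
  apply/eqP; rewrite -[_ == _]negbK coef_hard_trinomial // !inE eqn_mul2l.
  by rewrite muln_eq0 (eqn0Ngt a) a_gt0 two_a_neq1 (ltn_eqF a_lt_N).
have := doubling_count P1 doubling (ltnSn _); apply/negP; rewrite -leqNgt.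
apply: leq_trans (count_exists_le_sum _ _) _.
rewrite -[l in l * m]card_ord -sum_nat_const; apply: leq_sum => i _.
exact: leq_trans (count_coef_neq0_le_nterms _ (iota_uniq _ _)) (g_terms i).
Qed.
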